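(* Let $\omega$ be a weight function and let $\mathcal M_\omega=(\mathbf W^{(\lambda)})_{\lambda>0}$, $W^{(\lambda)}_\alpha:=e^{\frac1\lambda\varphi^*_\omega(\lambda|\alpha|)}$. Then $\Lambda_{\{\omega\}}=\Lambda_{\{\mathcal M_\omega\}}$ and $\Lambda_{(\omega)}=\Lambda_{(\mathcal M_\omega)}$, and these equalities are also topological.
   Context: A weight function is a continuous increasing function $\omega:[0,+\infty)\to[0,+\infty)$ such that: ($\alpha$) there is $L\ge1$ with $\omega(2t)\le L(\omega(t)+1)$ for all $t\ge0$; ($\beta$) $\omega(t)=O(t^2)$ as $t\to+\infty$; ($\gamma$) $\log t=o(\omega(t))$ as $t\to+\infty$; ($\delta$) $\varphi_\omega(t):=\omega(e^t)$ is convex on $[0,+\infty)$. For $t\in\mathbb R^d$, $\omega(t):=\omega(|t|)$. Young conjugate: $\varphi_\omega^*(s):=\sup_{t\ge0}\{ts-\varphi_\omega(t)\}$. $\alpha^{1/2}:=(\alpha_1^{1/2},\dots,\alpha_d^{1/2})$. $\Lambda_{\{\omega\}}$ is the set of $\mathbf c=(c_\alpha)\in\mathbb C^{\mathbb N_0^d}$ such that $\sup_\alpha|c_\alpha|e^{\frac1j\omega(\alpha^{1/2}/j)}<\infty$ for some $j\in\mathbb N$ (inductive limit topology); $\Lambda_{(\omega)}$ is the set of $\mathbf c$ with $\sup_\alpha|c_\alpha|e^{j\omega(j\alpha^{1/2})}<\infty$ for all $j\in\mathbb N$ (projective limit topology). For a sequence $\mathbf M=(M_\alpha)$, $\omega_{\mathbf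 M}(t)=\sup_{\alpha\in\mathbb N^d_{0,t}}\log\frac{|t^\alpha|}{M_\alpha}$, where $\mathbb N^d_{0,t}=\{\alpha:\alpha_j=0\text{ whenever }t_j=0\}$, $0^0=1$; $\|\mathbf c\|_{\mathbf M,h}:=\sup_\alpha|c_\alpha|e^{\omega_{\mathbf M}(\alpha^{1/2}/h)}$. $\Lambda_{\{\mathcal M_\omega\}}$ is the set of $\mathbf c$ with $\|\mathbf c\|_{\mathbf W^{(\lambda)},h}<\infty$ for some $\lambda,h>0$ (inductive limit over $j$ of the norms $\|\cdot\|_{\mathbf W^{(j)},j}$); $\Lambda_{(\mathcal M_\omega)}$ the set with this finite for all $\lambda,h>0$ (projective limit of the norms $\|\cdot\|_{\mathbf W^{(1/j)},1/j}$). *)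

From mathcomp Require Import all_boot all_order all_algebra.
From mathcomp Require Import all_classical all_reals all_analysis.
From mathcomp Require Import complex.
Import Order.TTheory GRing.Theory Num.Theory ComplexField.
Import numFieldNormedType.Exports.

Set Implicit Arguments.
Unset Strict Implicit.
Unset Printing Implicit Defensive.

Local Open Scope classical_set_scope.
Local Open Scope ring_scope.

Section Defs.
Variable R : realType.

Definition is_weight (om : R -> R) : Prop :=
  {within [set t : R | 0 <= t], continuous om} /\
  (forall t, 0 <= t -> 0 <= om t) /\
  (forall s t, 0 <= s -> s <= t -> om s <= om t) /\
  (exists L : R, 1 <= L /\ forall t, 0 <= t -> om (2 * t) <= L * (om t + 1)) /\
  (exists C T : R, forall t, T <= t -> `|om t| <= C * `|t ^+ 2|) /\
  (* (gamma) log t = o(om t) as t -> +oo *)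
  (forall eps : R, 0 < eps -> exists T : R, forall t, T <= t ->
      `|ln t| <= eps * `|om t|) /\
  (* (delta) phi_om(t) = om(e^t) convex on [0,+oo) *)
  (forall x y th : R, 0 <= x -> 0 <= y -> 0 <= th <= 1 ->
      om (expR (th * x + (1 - th) * y))
        <= th * om (expR x) + (1 - th) * om (expR y)).

Definition phi_om (om : R -> R) (t : R) : R := om (expR t).

(* Young conjugate, as an extended real (finite for weight functions) *)
Definition phistar (om : R -> R) (s : R) : \bar R :=
  ereal_sup [set ((t * s - phi_om om t)%:E) | t in [set t : R | 0 <= t]].

Definition mi (d : nat) := 'I_d -> nat.

Definition mi_abs d (a : mi d) : nat := (\sum_(i < d) a i)%N.

Definition mi_sqrt d (a : mi d) : 'I_d -> R := fun i => Num.sqrt (a i)%:R.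

(* Euclidean norm on R^d, and om(t) := om(|t|) *)
Definition eucl d (t : 'I_d -> R) : R := Num.sqrt (\sum_(i < d) t i ^+ 2).

Definition seqC d := mi d -> R[i].

(* sup_alpha |c_alpha| w_alpha, in the extended reals (0 * +oo = 0) *)
Definition wnorm d (w : mi d -> \bar R) (c : seqC d) : \bar R :=
  ereal_sup [set ((Normc.normc (c a))%:E * w a)%E | a in [set: mi d]].

Definition Wlam (om : R -> R) (lam : R) d (a : mi d) : R :=
  expR (lam^-1 * fine (phistar om (lam * (mi_abs a)%:R))).

Definition omegaM d (M : mi d -> R) (t : 'I_d -> R) : \bar R :=
  ereal_sup [set (ln (`| \prod_(i < d) t i ^+ a i | / M a))%:E
            | a in [set a : mi d | forall i, t i = 0 -> a i = 0%N]].

Definition normMh d (M : mi d -> R) (h : R) (c : seqC d) : \bar R :=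
  wnorm (fun a => expeR (omegaM M (fun i => mi_sqrt a i / h))) c.

Definition norm_om_inf (om : R -> R) d (n : nat) (c : seqC d) : \bar R :=
  let j : R := n.+1%:R in
  wnorm (fun a => (expR (j^-1 * om (eucl (fun i => mi_sqrt a i / j))))%:E) c.

Definition norm_om_proj (om : R -> R) d (n : nat) (c : seqC d) : \bar R :=
  let j : R := n.+1%:R in
  wnorm (fun a => (expR (j * om (eucl (fun i => j * mi_sqrt a i))))%:E) c.

Definition norm_M_inf (om : R -> R) d (n : nat) (c : seqC d) : \bar R :=
  normMh (@Wlam om n.+1%:R d) n.+1%:R c.

Definition norm_M_proj (om : R -> R) d (n : nat) (c : seqC d) : \bar R :=
  normMh (@Wlam om (n.+1%:R)^-1 d) (n.+1%:R)^-1 c.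

Definition Lam_om_inf (om : R -> R) d : set (seqC d) :=
  [set c | exists n : nat, (norm_om_inf om n c < +oo)%E].
Definition Lam_om_proj (om : R -> R) d : set (seqC d) :=
  [set c | forall n : nat, (norm_om_proj om n c < +oo)%E].
Definition Lam_M_inf (om : R -> R) d : set (seqC d) :=
  [set c | exists lam h : R, 0 < lam /\ 0 < h /\
           (normMh (@Wlam om lam d) h c < +oo)%E].
Definition Lam_M_proj (om : R -> R) d : set (seqC d) :=
  [set c | forall lam h : R, 0 < lam -> 0 < h ->
           (normMh (@Wlam om lam d) h c < +oo)%E].

Definition seq_add d (x y : seqC d) : seqC d := fun a => x a + y a.

Definition absconvex d (V : set (seqC d)) : Prop :=
  forall x y, V x -> V y -> forall s t : R[i],
    Normc.normc s + Normc.normc t <= 1 -> V (fun a => s * x a + t * y a).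

(* 0-neighbourhoods of the locally convex inductive limit on E of the
   normed steps X_n = {c | p n c < +oo}: U contains an absolutely convex
   V in E whose trace on every step X_n is a 0-neighbourhood of X_n. *)
Definition lc_ind_nbhd0 d (p : nat -> seqC d -> \bar R) (E U : set (seqC d)) :=
  exists V : set (seqC d), V `<=` E /\ absconvex V /\ V `<=` U /\
    forall n, exists eps : R, 0 < eps /\ [set c | (p n c < eps%:E)%E] `<=` V.

Definition lc_ind_open d (p : nat -> seqC d -> \bar R) (E U : set (seqC d)) :=
  U `<=` E /\ forall x, U x -> lc_ind_nbhd0 p E [set c | U (seq_add x c)].

(* 0-neighbourhoods of the projective limit (topology of the seminorms p n) *)
Definition lc_proj_nbhd0 d (p : nat -> seqC d -> \bar R) (E U : set (seqC d)) :=
  exists (N : nat) (eps : R), 0 < eps /\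
    [set c | E c /\ forall n, (n <= N)%N -> (p n c < eps%:E)%E] `<=` U.

Definition lc_proj_open d (p : nat -> seqC d -> \bar R) (E U : set (seqC d)) :=
  U `<=` E /\ forall x, U x -> lc_proj_nbhd0 p E [set c | U (seq_add x c)].

End Defs.

From mathcomp Require Import all_boot all_order all_algebra.
From mathcomp Require Import all_classical all_reals all_analysis.
From mathcomp Require Import complex.
From mathcomp Require Import ring lra.
Import Order.TTheory GRing.Theory Num.Theory ComplexField.
Import numFieldNormedType.Exports.

Set Implicit Arguments.
Unset Strict Implicit.
Unset Printing Implicit Defensive.
Local Open Scope classical_set_scope.
Local Open Scope ring_scope.

(* Up to additive constants, the associated function of W^(lam) at alpha^(1/2) / h lies between
   om (|alpha|^(1/2) / (h (d + 1))) / (2 lam) and (om (|alpha|^(1/2) / h) + om 1) / lam.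
   The upper bound is Young's inequality for phi_om and its conjugate.  For the lower bound,
   test the supremum defining the associated function on k e_i, where alpha_i is a largest
   coordinate of alpha and lam k lies just below a subgradient of phi_om at
   log (alpha_i^(1/2) / h); this loses log (alpha_i^(1/2) / h), which log t = o(om t) absorbs.
   So every step norm of either scale is dominated by a step norm of the other, in the direction
   required by inductive, resp. projective, limits. *)

Section Domination.
Variables (R : realType) (d : nat).
Local Open Scope ereal_scope.

Definition dominated (q p : seqC R d -> \bar R) : Prop :=
  exists2 C : R, (0 < C)%R & forall c, q c <= C%:E * p c.

Lemma normc_ge0 (z : R[i]) : (0 <= Normc.normc z)%R.
Proof. by case: z => a b; exact: sqrtr_ge0. Qed.

Lemma wnorm_dominated (w1 w2 : mi d -> \bar R) (C : R) : (0 < C)%R ->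
  (forall a, w1 a <= C%:E * w2 a) -> dominated (wnorm w1) (wnorm w2).
Proof.
move=> C0 w12; exists C => // c; apply: ge_ereal_sup => _ [a _ <-].
apply: (le_trans (lee_wpmul2l _ (w12 a))); first by rewrite lee_fin normc_ge0.
rewrite muleCA; apply: lee_wpmul2l; first by rewrite lee_fin ltW.
by apply: ereal_sup_ubound; exists a.
Qed.

Lemma dominated_lt_pinfty (q p : seqC R d -> \bar R) c :
  dominated q p -> p c < +oo -> q c < +oo.
Proof.
by move=> [C C0 qp] pc; rewrite (le_lt_trans (qp c)) ?lte_mul_pinfty ?lee_fin ?ltW.
Qed.

Lemma dominated_lt (q p : seqC R d -> \bar R) (C e : R) c : (0 < C)%R ->
  (forall c, q c <= C%:E * p c) -> p c < (e / C)%:E -> q c < e%:E.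
Proof.
move=> C0 qp pc; apply: le_lt_trans (qp c) _.
by rewrite -[e](divfK (lt0r_neq0 C0)) mulrC EFinM lte_pmul2l ?lte_fin.
Qed.

Lemma lc_ind_nbhd0_dominated (p q : nat -> seqC R d -> \bar R) E U :
  (forall m, exists n, dominated (p n) (q m)) ->
  lc_ind_nbhd0 p E U -> lc_ind_nbhd0 q E U.
Proof.
move=> pq [V [VE [Vac [VU Vp]]]]; exists V; do 3!split => //.
move=> m; have [n [C C0 pqC]] := pq m; have [e [e0 pV]] := Vp n.
exists (e / C)%R; split; first by rewrite divr_gt0.
by move=> c /= qc; apply: pV; exact: (dominated_lt C0 pqC qc).
Qed.

Lemma lc_proj_nbhd0_dominated (p q : nat -> seqC R d -> \bar R) E U :
  (forall m, exists n, dominated (q m) (p n)) ->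
  lc_proj_nbhd0 q E U -> lc_proj_nbhd0 p E U.
Proof.
move=> qp [N [e [e0 qU]]].
have /choice[f fP] : forall m, exists nC : nat * R,
    (0 < nC.2)%R /\ forall c, q m c <= nC.2%:E * p nC.1 c.
  by move=> m; have [n [C C0 qpC]] := qp m; exists (n, C).
pose K := (\sum_(m < N.+1) (f m).2)%R.
have fK m : (m <= N)%N -> ((f m).2 <= K)%R.
  move=> mN; rewrite /K (bigD1 (Ordinal (mN : m < N.+1)%N)) //= lerDl.
  by rewrite sumr_ge0 // => i _; exact/ltW/(fP i).1.
have K0 : (0 < K)%R := lt_le_trans (fP 0%N).1 (fK 0%N (leq0n N)).
exists (\max_(m < N.+1) (f m).1)%N, (e / K)%R; split; first by rewrite divr_gt0.
move=> c [Ec pc]; apply: qU; split => // m mN; have [C0 qpC] := fP m.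
apply: (dominated_lt C0 qpC); apply: lt_le_trans (pc _ _) _.
  by rewrite (bigD1 (Ordinal (mN : m < N.+1)%N)) //= leq_maxl.
by rewrite lee_fin ler_pM2l // lef_pV2 ?posrE ?fK.
Qed.

Lemma lc_ind_open_dominated (p q : nat -> seqC R d -> \bar R) E U :
  (forall m, exists n, dominated (p n) (q m)) ->
  (forall m, exists n, dominated (q n) (p m)) ->
  lc_ind_open p E U <-> lc_ind_open q E U.
Proof.
move=> pq qp; split=> -[UE HU]; split=> // x /HU.
  exact: lc_ind_nbhd0_dominated.
exact: lc_ind_nbhd0_dominated.
Qed.

Lemma lc_proj_open_dominated (p q : nat -> seqC R d -> \bar R) E U :
  (forall m, exists n, dominated (p m) (q n)) ->
  (forall m, exists n, dominated (q m) (p n)) ->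
  lc_proj_open p E U <-> lc_proj_open q E U.
Proof.
move=> pq qp; split=> -[UE HU]; split=> // x /HU.
  exact: lc_proj_nbhd0_dominated.
exact: lc_proj_nbhd0_dominated.
Qed.

End Domination.

Section WeightFunction.
Variables (R : realType) (om : R -> R).
Hypothesis om_ge0 : forall t : R, 0 <= t -> 0 <= om t.
Hypothesis om_le : forall s t : R, 0 <= s -> s <= t -> om s <= om t.
Hypothesis ln_o_om : forall eps : R, 0 < eps -> exists T : R, forall t, T <= t ->
  `|ln t| <= eps * `|om t|.
Hypothesis phi_om_convex : forall x y th : R, 0 <= x -> 0 <= y -> 0 <= th <= 1 ->
  om (expR (th * x + (1 - th) * y)) <= th * om (expR x) + (1 - th) * om (expR y).

Local Notation phi := (phi_om om).

Lemma phi_ge0 (t : R) : 0 <= phi t.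
Proof. exact/om_ge0/expR_ge0. Qed.

Lemma phi_le (x y : R) : x <= y -> phi x <= phi y.
Proof. by move=> xy; apply: om_le; rewrite ?expR_ge0 ?ler_expR. Qed.

(* (gamma) gives [t <= phi t / (s + 1)], i.e. [t * s - phi t <= - t], for large [t]. *)
Lemma phistar_fin_num (s : R) : 0 <= s -> phistar om s \is a fin_num.
Proof.
move=> s0; have eps0 : 0 < (s + 1)^-1 by rewrite invr_gt0; lra.
have [T HT] := ln_o_om eps0.
have ub : (phistar om s <= (s * `|T|)%:E)%E.
  apply: ge_ereal_sup => _ [t /= t0 <-]; rewrite lee_fin.
  have ph0 := phi_ge0 t; have sT : 0 <= s * `|T| by rewrite mulr_ge0.
  have [Tt|tT] := leP T (expR t).
    have := HT _ Tt; rewrite expRK (ger0_norm t0) (ger0_norm ph0) ler_pdivlMl; last lra.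
    nra.
  have : t <= `|T| by have := expR_ge1Dx t; have := ler_norm T; lra.
  nra.
have lb : ((0 * s - phi 0)%:E <= phistar om s)%E.
  by apply: ereal_sup_ubound; exists 0 => /=.
by rewrite fin_numElt (lt_le_trans _ lb) ?(le_lt_trans ub) ?ltNyr ?ltry.
Qed.

Definition phistarR (s : R) : R := fine (phistar om s).

Lemma young_le (s t : R) : 0 <= s -> 0 <= t -> t * s - phi t <= phistarR s.
Proof.
move=> s0 t0; rewrite -lee_fin fineK ?phistar_fin_num //.
by apply: ereal_sup_ubound; exists t.
Qed.

Lemma phistarR_le (s B : R) : 0 <= s ->
  (forall t, 0 <= t -> t * s - phi t <= B) -> phistarR s <= B.
Proof.
move=> s0 sB; rewrite -lee_fin fineK ?phistar_fin_num //.
by apply: ge_ereal_sup => _ [t t0 <-]; rewrite lee_fin sB.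
Qed.

Lemma phi_slope_le (x y z : R) : 0 <= x -> x < y -> y < z ->
  (phi y - phi x) / (y - x) <= (phi z - phi y) / (z - y).
Proof.
move=> x0 xy yz; have zx : 0 < z - x by lra.
pose th := (z - y) / (z - x).
have th_ge0 : 0 <= th by rewrite divr_ge0 //; lra.
have th_le1 : th <= 1 by rewrite ler_pdivrMr //; lra.
have thE : (z - x) * th = z - y by rewrite mulrC divfK // lt0r_neq0.
have yE : th * x + (1 - th) * z = y by rewrite /th; field; rewrite lt0r_neq0.
have conv : phi y <= th * phi x + (1 - th) * phi z.
  by rewrite /phi_om -{1}yE; apply: phi_om_convex; rewrite ?th_ge0 //; lra.
rewrite ler_pdivrMr; last lra.
rewrite mulrAC ler_pdivlMr; last lra.
nra.
Qed.

(* The infimum of the right difference quotients of [phi] at [x]; it is nonnegative as [phi]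
   is nondecreasing. *)
Lemma phi_subgradient (x : R) : 0 <= x -> exists2 s, 0 <= s &
  forall y, 0 <= y -> phi x + s * (y - x) <= phi y.
Proof.
move=> x0.
pose S := [set (phi z - phi x) / (z - x) | z in [set z | x < z]].
have S_ge0 : lbound S 0.
  move=> _ [z /= xz <-]; rewrite divr_ge0 //; last lra.
  by have := phi_le (ltW xz); lra.
have S0 : S !=set0.
  by exists ((phi (x + 1) - phi x) / (x + 1 - x)); exists (x + 1) => //=; lra.
exists (inf S); first exact: lb_le_inf.
move=> y y0; case: (ltgtP y x) => [yx|xy|->]; last by rewrite subrr mulr0 addr0.
- have : (phi x - phi y) / (x - y) <= inf S.
    by apply: lb_le_inf => // _ [z /= xz <-]; exact: phi_slope_le.
  by rewrite ler_pdivrMr; [nra | lra].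
- have : inf S <= (phi y - phi x) / (y - x) by apply: ge_inf; [exists 0 | exists y].
  by rewrite ler_pdivlMr; [nra | lra].
Qed.

Lemma ln_sub_phistarR_le (lam u P : R) (k : nat) : 0 < lam -> 0 <= u -> 0 < P -> P <= u ^+ k ->
  ln P - lam^-1 * phistarR (lam * k%:R) <= (om u + om 1) / lam.
Proof.
move=> l0 u0 P0 Pu; set L := lam^-1; set k' : R := k%:R.
have L0 : 0 < L by rewrite invr_gt0.
have lk0 : 0 <= lam * k' by rewrite mulr_ge0 ?ler0n // ltW.
have omu := om_ge0 u0; have om1 := om_ge0 ler01.
rewrite mulrDl !(mulrC _ L).
have [u1|u1] := leP 1 u.
  have u_gt0 : 0 < u := lt_le_trans ltr01 u1.
  have lnP : ln P <= k' * ln u.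
    by rewrite /k' mulr_natl -lnXn // ler_ln ?posrE ?exprn_gt0.
  have := young_le lk0 (ln_ge0 u1); rewrite /phi_om lnK ?posrE // => young.
  have : L * (ln u * (lam * k') - om u) <= L * phistarR (lam * k').
    by rewrite ler_pM2l.
  have -> : L * (ln u * (lam * k') - om u) = k' * ln u - L * om u.
    by rewrite /L; field; rewrite lt0r_neq0.
  have := mulr_ge0 (ltW L0) om1; lra.
have lnP : ln P <= 0.
  by apply/ln_le0/(le_trans Pu)/exprn_ile1 => //; exact: ltW.
have := young_le lk0 (lexx 0); rewrite mul0r sub0r /phi_om expR0 => young.
have : L * - om 1 <= L * phistarR (lam * k') by rewrite ler_pM2l.
have := mulr_ge0 (ltW L0) omu; rewrite mulrN; lra.
Qed.

(* Take [lam * k] just below a subgradient [s] of [phi] at [ln v], so that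
   [phi^*(lam * k) <= s ln v - phi (ln v)]. *)
Lemma exists_ln_sub_phistarR_ge (lam v : R) : 0 < lam -> 1 <= v -> exists k : nat,
  om v / lam - ln v <= k%:R * ln v - lam^-1 * phistarR (lam * k%:R).
Proof.
move=> l0 v1; have v0 : 0 < v := lt_le_trans ltr01 v1.
set x := ln v; have x0 : 0 <= x by apply: ln_ge0.
have [s s0 sub] := phi_subgradient x0.
set L := lam^-1; have L0 : 0 < L by rewrite invr_gt0.
have sL0 : 0 <= s * L by rewrite mulr_ge0 // ltW.
exists (Num.truncn (s * L)); set k : R := (Num.truncn (s * L))%:R.
have /andP[ksL sLk] := Num.Theory.truncn_itv sL0; rewrite -/k -natr1 in ksL sLk.
have lk0 : 0 <= lam * k by rewrite mulr_ge0 ?ler0n // ltW.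
have lks : lam * k <= s.
  by rewrite -(ler_pM2l L0) mulrA mulVf ?lt0r_neq0 // mul1r mulrC.
have : phistarR (lam * k) <= s * x - phi x.
  apply: phistarR_le => // t t0; have := sub t t0.
  have : t * (lam * k) <= t * s by rewrite ler_wpM2l.
  lra.
rewrite /phi_om lnK ?posrE // => ps_le.
have : L * phistarR (lam * k) <= L * (s * x - om v) by rewrite ler_pM2l.
have : (s * L - 1) * x <= k * x by rewrite ler_wpM2r //; lra.
have -> : om v / lam = L * om v by rewrite mulrC.
rewrite /x; nra.
Qed.

Variable d : nat.
Local Notation W lam := (@Wlam R om lam d).

Lemma ln_div_Wlam (lam P : R) (b : mi d) : 0 < P ->
  ln (P / W lam b) = ln P - lam^-1 * phistarR (lam * (mi_abs b)%:R).
Proof.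
move=> P0; rewrite /Wlam lnM ?posrE ?invr_gt0 ?expR_gt0 //.
by rewrite lnV ?posrE ?expR_gt0 // expRK.
Qed.

Lemma mi_le_abs (a : mi d) i : (a i <= mi_abs a)%N.
Proof. by rewrite /mi_abs (bigD1 i) //= leq_addr. Qed.

Lemma mi_abs_le_max (a : mi d) : (0 < mi_abs a)%N -> exists i, (mi_abs a <= d * a i)%N.
Proof.
move=> a_gt0; case: (pickP (fun _ : 'I_d => true)) => [i0 _|no_index]; last first.
  by move: a_gt0; rewrite /mi_abs big1 // => i _; have := no_index i.
have [i _ amax] := @arg_maxnP _ i0 predT a isT; exists i.
rewrite /mi_abs (@leq_trans (\sum_(j < d) a i)) ?leq_sum //.
by rewrite sum_nat_const card_ord.
Qed.

Lemma euclMr (f : 'I_d -> R) (x : R) : eucl (fun i => f i * x) = eucl f * `|x|.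
Proof.
rewrite /eucl; under eq_bigr do rewrite exprMn.
by rewrite -mulr_suml sqrtrM ?sumr_ge0 // => [|i _]; rewrite ?sqrtr_sqr ?sqr_ge0.
Qed.

Lemma euclMl (f : 'I_d -> R) (x : R) : eucl (fun i => x * f i) = `|x| * eucl f.
Proof. by under eq_fun do rewrite mulrC; rewrite euclMr mulrC. Qed.

Lemma eucl_mi_sqrt (a : mi d) : eucl (mi_sqrt R a) = Num.sqrt (mi_abs a)%:R.
Proof.
rewrite /eucl /mi_abs natr_sum; congr Num.sqrt.
by apply: eq_bigr => i _; rewrite sqr_sqrtr.
Qed.

Lemma omegaM_Wlam_ge0 (lam : R) (t : 'I_d -> R) : 0 < lam -> (0 <= omegaM (W lam) t)%E.
Proof.
move=> l0; apply: (@le_trans _ _ (ln (1 / W lam (fun _ => 0%N)))%:E).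
  rewrite ln_div_Wlam // ln1 /mi_abs big1 // mulr0 sub0r lee_fin oppr_ge0.
  apply: mulr_ge0_le0; first by rewrite invr_ge0 ltW.
  by apply: phistarR_le => // s _; rewrite mulr0 sub0r oppr_le0 phi_ge0.
by apply: ereal_sup_ubound; exists (fun _ => 0%N) => //=; rewrite big1 ?normr1.
Qed.

Lemma omegaM_Wlam_le (lam h : R) (a : mi d) : 0 < lam -> 0 < h ->
  (omegaM (W lam) (fun i => mi_sqrt R a i / h)%R
    <= ((om (Num.sqrt (mi_abs a)%:R / h) + om 1) / lam)%R%:E)%E.
Proof.
move=> l0 h0; apply: ge_ereal_sup => _ [b _ <-]; rewrite lee_fin.
set u := Num.sqrt (mi_abs a)%:R / h.
have u0 : 0 <= u by rewrite divr_ge0 ?sqrtr_ge0 // ltW.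
set P := `| _ |.
have Pu : P <= u ^+ mi_abs b.
  rewrite /P normr_prod /mi_abs -prodrXr; apply: ler_prod => i _.
  rewrite normr_ge0 normrX; apply: lerXn2r; rewrite ?nnegrE ?normr_ge0 //.
  rewrite /u /mi_sqrt ger0_norm ?divr_ge0 ?sqrtr_ge0 ?(ltW h0) // ler_pM2r ?invr_gt0 //.
  by rewrite ler_sqrt // ler_nat mi_le_abs.
have := normr_ge0 (\prod_(i < d) (mi_sqrt R a i / h) ^+ b i).
rewrite le0r -/P => /orP[/eqP->|P0].
  by rewrite mul0r ln0 // divr_ge0 ?addr_ge0 ?om_ge0 // ltW.
by rewrite ln_div_Wlam //; exact: ln_sub_phistarR_le.
Qed.

Lemma omegaM_Wlam_ge_coord (lam h : R) (a : mi d) i : 0 < lam -> 0 < h ->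
  1 <= mi_sqrt R a i / h ->
  ((om (mi_sqrt R a i / h) / lam - ln (mi_sqrt R a i / h))%R%:E
    <= omegaM (W lam) (fun j => mi_sqrt R a j / h)%R)%E.
Proof.
move=> l0 h0 v1; set v := mi_sqrt R a i / h.
have v0 : 0 < v := lt_le_trans ltr01 v1.
have [k kP] := exists_ln_sub_phistarR_ge l0 v1.
pose b : mi d := fun j => if j == i then k else 0%N.
apply: (@le_trans _ _ (ln (`|\prod_(j < d) (mi_sqrt R a j / h) ^+ b j| / W lam b))%:E).
  have vb : \prod_(j < d) (mi_sqrt R a j / h) ^+ b j = v ^+ k.
    by rewrite (bigD1 i) //= /b eqxx big1 ?mulr1 // => j /negbTE ->.
  have bk : mi_abs b = k.
    by rewrite /mi_abs (bigD1 i) //= /b eqxx big1 ?addn0 // => j /negbTE ->.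
  rewrite vb ger0_norm ?exprn_ge0 ?(ltW v0) // ln_div_Wlam ?exprn_gt0 // bk.
  by rewrite lnXn // -[ln v *+ k]mulr_natl lee_fin.
apply: ereal_sup_ubound; exists b => // j; rewrite /b; case: eqP => // -> vi0.
by move: v0; rewrite /v vi0 ltxx.
Qed.

(* With [a i] maximal, [w := |a|^(1/2) / (h (d+1)) <= v := a_i^(1/2) / h]; for large [v],
   [ln v <= om v / (2 lam)] by (gamma), and small [v] only cost the constant [om T1 / (2 lam)]. *)
Lemma omegaM_Wlam_ge (lam h : R) : 0 < lam -> 0 < h -> exists C : R, forall a : mi d,
  ((om (Num.sqrt (mi_abs a)%:R / (h * d.+1%:R)) / (2 * lam) - C)%R%:E
    <= omegaM (W lam) (fun j => mi_sqrt R a j / h)%R)%E.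
Proof.
move=> l0 h0; have l2 : 0 < 2 * lam by rewrite mulr_gt0.
have eps0 : 0 < (2 * lam)^-1 by rewrite invr_gt0.
have [T HT] := ln_o_om eps0.
set T1 := Num.max T 1.
have T1_ge1 : 1 <= T1 by rewrite le_max lexx orbT.
have T1_geT : T <= T1 by rewrite le_max lexx.
exists (om T1 / (2 * lam)) => a.
set D : R := d.+1%:R; have D0 : 0 < D by rewrite ltr0n.
set w := Num.sqrt (mi_abs a)%:R / (h * D).
have w0 : 0 <= w by rewrite divr_ge0 ?sqrtr_ge0 // mulr_ge0 // ltW.
have small : om w <= om T1 -> ((om w / (2 * lam) - om T1 / (2 * lam))%R%:E
    <= omegaM (W lam) (fun j => mi_sqrt R a j / h)%R)%E.
  move=> wT; apply: le_trans (omegaM_Wlam_ge0 (fun j => mi_sqrt R a j / h) l0).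
  by rewrite lee_fin subr_le0 ler_pM2r.
have [a0|a_gt0] := posnP (mi_abs a).
  apply/small/om_le => //.
  by rewrite /w a0 sqrtr0 mul0r (le_trans ler01 T1_ge1).
have [i ai] := mi_abs_le_max a_gt0.
set v := mi_sqrt R a i / h.
have wv : w <= v.
  rewrite /w /v ler_pdivrMr ?mulr_gt0 //.
  have -> : mi_sqrt R a i / h * (h * D) = Num.sqrt (D ^+ 2 * (a i)%:R).
    rewrite sqrtrM ?exprn_ge0 ?(ltW D0) // sqrtr_sqr ger0_norm ?(ltW D0) //.
    by rewrite /mi_sqrt; field; rewrite lt0r_neq0.
  rewrite ler_sqrt ?mulr_ge0 ?exprn_ge0 ?(ltW D0) //.
  rewrite /D -natrX -natrM ler_nat (leq_trans ai) // leq_mul2r.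
  by rewrite expnS (leq_trans (leqnSn d)) ?leq_pmulr ?orbT.
have [vT|Tv] := ltP v T1.
  apply/small/(le_trans (om_le w0 wv))/om_le; [exact: le_trans w0 wv | exact: ltW].
have v1 : 1 <= v := le_trans T1_ge1 Tv.
apply: le_trans (omegaM_Wlam_ge_coord l0 h0 v1); rewrite lee_fin -/v.
have := HT v (le_trans T1_geT Tv).
rewrite ger0_norm ?ln_ge0 // ger0_norm ?om_ge0 ?(le_trans ler01 v1) // => lnv.
have : om w / (2 * lam) <= om v / (2 * lam) by rewrite ler_pM2r ?om_le.
have : 0 <= om T1 / (2 * lam) by rewrite divr_ge0 ?om_ge0 ?(le_trans ler01 T1_ge1) ?ltW.
have -> : om v / lam = 2 * ((2 * lam)^-1 * om v) by field; rewrite lt0r_neq0.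
rewrite !(mulrC _ (2 * lam)^-1); lra.
Qed.

Lemma expeR_le_expR_mul (y : \bar R) (x C : R) :
  (y <= (C + x)%:E)%E -> (expeR y <= (expR C)%:E * (expR x)%:E)%E.
Proof.
by move=> yx; rewrite -EFinM -expRD -[X in (_ <= X)%E]/(expeR (C + x)%:E) lee_expeR.
Qed.

Lemma expR_le_mul_expeR (x C : R) (y : \bar R) :
  ((x - C)%:E <= y)%E -> ((expR x)%:E <= (expR C)%:E * expeR y)%E.
Proof.
move=> xy; have -> : (expR x)%:E = ((expR C)%:E * expeR (x - C)%:E)%E.
  by rewrite /= -EFinM -expRD addrC subrK.
by apply: lee_wpmul2l; rewrite ?lee_fin ?expR_ge0 ?lee_expeR.
Qed.

Lemma norm_M_inf_dominated n :
  dominated (@norm_M_inf R om d n) (@norm_om_inf R om d n).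
Proof.
set j : R := n.+1%:R; have j0 : 0 < j by rewrite ltr0Sn.
apply: (wnorm_dominated (expR_gt0 (om 1 / j))) => a.
apply: expeR_le_expR_mul; apply: le_trans (omegaM_Wlam_le a j0 j0) _.
rewrite euclMr eucl_mi_sqrt ger0_norm ?invr_ge0 ?(ltW j0) // lee_fin.
by rewrite -/j mulrDl addrC (mulrC j^-1).
Qed.

Lemma norm_om_inf_dominated (lam h : R) : 0 < lam -> 0 < h ->
  exists n, dominated (@norm_om_inf R om d n) (normMh (W lam) h).
Proof.
move=> l0 h0; have [C lb] := omegaM_Wlam_ge l0 h0.
set D : R := d.+1%:R; have hD0 : 0 < h * D by rewrite mulr_gt0 ?ltr0n.
exists (Num.truncn (h * D + 2 * lam)).
set j : R := (Num.truncn (h * D + 2 * lam)).+1%:R.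
have hj : h * D + 2 * lam < j := Num.Theory.truncnS_gt _.
have j0 : 0 < j by rewrite ltr0Sn.
apply: (wnorm_dominated (expR_gt0 C)) => a.
apply: expR_le_mul_expeR; apply: le_trans (lb a).
rewrite euclMr eucl_mi_sqrt ger0_norm ?invr_ge0 ?(ltW j0) // lee_fin lerD2r -/j -/D.
set u := Num.sqrt (mi_abs a)%:R; have u0 : 0 <= u := sqrtr_ge0 _.
have uj : u / j <= u / (h * D) by rewrite ler_wpM2l // lef_pV2 ?posrE //; lra.
have j2l : j^-1 <= (2 * lam)^-1 by rewrite lef_pV2 ?posrE ?mulr_gt0 //; lra.
apply: le_trans (ler_wpM2r (om_ge0 (divr_ge0 u0 (ltW j0))) j2l) _.
by rewrite mulrC ler_wpM2r ?invr_ge0 ?mulr_ge0 ?(ltW l0) ?om_le ?divr_ge0 ?(ltW j0).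
Qed.

Lemma normMh_dominated (lam h : R) : 0 < lam -> 0 < h ->
  exists n, dominated (normMh (W lam) h) (@norm_om_proj R om d n).
Proof.
move=> l0 h0; exists (Num.truncn (lam^-1 + h^-1)).
set j : R := (Num.truncn (lam^-1 + h^-1)).+1%:R.
have hj : lam^-1 + h^-1 < j := Num.Theory.truncnS_gt _.
have j0 : 0 < j by rewrite ltr0Sn.
apply: (wnorm_dominated (expR_gt0 (om 1 / lam))) => a.
apply: expeR_le_expR_mul; apply: le_trans (omegaM_Wlam_le a l0 h0) _.
rewrite euclMl eucl_mi_sqrt ger0_norm ?(ltW j0) // lee_fin -/j.
set u := Num.sqrt (mi_abs a)%:R; have u0 : 0 <= u := sqrtr_ge0 _.
have li : 0 < lam^-1 by rewrite invr_gt0.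
have hi : 0 < h^-1 by rewrite invr_gt0.
have uh : u / h <= j * u by rewrite mulrC ler_wpM2r //; lra.
have := om_le (divr_ge0 u0 (ltW h0)) uh; have := om_ge0 (divr_ge0 u0 (ltW h0)).
have : lam^-1 <= j by lra.
have := om_ge0 ler01; nra.
Qed.

Lemma norm_om_proj_dominated n :
  exists m, dominated (@norm_om_proj R om d n) (@norm_M_proj R om d m).
Proof.
set M := (2 * (n.+1 * d.+1))%N.
exists M.-1; rewrite /norm_M_proj prednK ?muln_gt0 //.
set j : R := n.+1%:R; have j0 : 0 < j by rewrite ltr0Sn.
set D : R := d.+1%:R; have D1 : 1 <= D by rewrite ler1n.
have ME : (M%:R : R) = 2 * (j * D) by rewrite /M !natrM.
have Mi : 0 < (M%:R : R)^-1 by rewrite invr_gt0 ltr0n muln_gt0.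
have [C lb] := omegaM_Wlam_ge Mi Mi.
apply: (wnorm_dominated (expR_gt0 C)) => a.
apply: expR_le_mul_expeR; apply: le_trans (lb a).
rewrite euclMl eucl_mi_sqrt ger0_norm ?(ltW j0) // lee_fin lerD2r -/j -/D.
set u := Num.sqrt (mi_abs a)%:R; have u0 : 0 <= u := sqrtr_ge0 _.
have -> : u / ((M%:R)^-1 * D) = 2 * (j * u).
  by rewrite ME; field; rewrite !lt0r_neq0 //; lra.
have -> : (2 * (M%:R)^-1)^-1 = j * D by rewrite ME; field; rewrite !lt0r_neq0 //; lra.
have ju : 0 <= j * u by rewrite mulr_ge0 // ltW.
have ju2 : j * u <= 2 * (j * u) by lra.
have omj := om_le ju ju2.
by rewrite mulrCA ler_pM2l // (le_trans omj) // ler_peMr // (le_trans (om_ge0 ju) omj).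
Qed.

Lemma Lam_inf_eq : @Lam_om_inf R om d = @Lam_M_inf R om d.
Proof.
apply/seteqP; split => c.
  move=> [n cn]; have j0 : 0 < n.+1%:R :> R by rewrite ltr0Sn.
  exists n.+1%:R, n.+1%:R; do 2!split => //.
  exact: dominated_lt_pinfty (norm_M_inf_dominated n) cn.
move=> [lam [h [l0 [h0 ch]]]]; have [n dom] := norm_om_inf_dominated l0 h0.
by exists n; exact: dominated_lt_pinfty dom ch.
Qed.

Lemma Lam_proj_eq : @Lam_om_proj R om d = @Lam_M_proj R om d.
Proof.
apply/seteqP; split => c.
  move=> c_om lam h l0 h0; have [n dom] := normMh_dominated l0 h0.
  exact: dominated_lt_pinfty dom (c_om n).
move=> cM n; have [m dom] := norm_om_proj_dominated n.
by apply: dominated_lt_pinfty dom _; apply: cM; rewrite invr_gt0 ltr0Sn.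
Qed.

End WeightFunction.

Theorem proposition6p8 (R : realType) (d : nat) (om : R -> R) :
  is_weight om ->
  (@Lam_om_inf R om d = @Lam_M_inf R om d /\
   forall U : set (seqC R d),
     lc_ind_open (@norm_om_inf R om d) (@Lam_om_inf R om d) U <->
     lc_ind_open (@norm_M_inf R om d) (@Lam_M_inf R om d) U) /\
  (@Lam_om_proj R om d = @Lam_M_proj R om d /\
   forall U : set (seqC R d),
     lc_proj_open (@norm_om_proj R om d) (@Lam_om_proj R om d) U <->
     lc_proj_open (@norm_M_proj R om d) (@Lam_M_proj R om d) U).
Proof.
move=> [_ [om_ge0 [om_le [_ [_ [ln_o_om phi_om_convex]]]]]].
have Lam_inf := Lam_inf_eq om_ge0 om_le ln_o_om phi_om_convex d.
have Lam_proj := Lam_proj_eq om_ge0 om_le ln_o_om phi_om_convex d.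
split; split=> // U.
  rewrite -Lam_inf; apply: lc_ind_open_dominated => m.
    by apply: norm_om_inf_dominated => //; rewrite ltr0Sn.
  by exists m; apply: norm_M_inf_dominated.
rewrite -Lam_proj; apply: lc_proj_open_dominated => m.
  by apply: norm_om_proj_dominated.
by apply: normMh_dominated => //; rewrite invr_gt0 ltr0Sn.
Qed.
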